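(* Let $q$ be a nonzero complex number which is not a root of unity, and let $\mu(u)=\sum_{r\ge0}\mu^{(r)}u^{-r}$, $\bar\mu(u)=\sum_{r\ge0}\bar\mu^{(r)}u^r$ be formal series with complex coefficients. If the irreducible highest weight representation $V(\mu(u);\bar\mu(u))$ of $\mathrm{Y}'_q(\mathfrak{sp}_2)$ is finite-dimensional, then both $\mu^{(0)}$ and $\bar\mu^{(0)}$ are nonzero.
   Context: $R(u,v)=(u-v)\sum_{i\ne j}E_{ii}\otimes E_{jj}+(q^{-1}u-qv)\sum_i E_{ii}\otimes E_{ii}+(q^{-1}-q)u\sum_{i>j}E_{ij}\otimes E_{ji}+(q^{-1}-q)v\sum_{i<j}E_{ij}\otimes E_{ji}$ with indices in $\{1,2\}$. $\mathrm{U}^{\rm ext}_q(\widehat{\mathfrak{gl}}_2)$ is the algebra with generators $t_{ij}^{(r)},\bar t_{ij}^{(r)}$ ($r\ge0$), $(t_{ii}^{(0)})^{-1},(\bar t_{ii}^{(0)})^{-1}$, series $t_{ij}(u)=\sum_rt_{ij}^{(r)}u^{-r}$, $\bar t_{ij}(u)=\sum_r\bar t_{ij}^{(r)}u^r$, matrices $T(u)=\sum t_{ij}(u)\otimes E_{ij}$, $\overline T(u)=\sum \bar t_{ij}(u)\otimes E_{ij}$ and relations $t_{12}^{(0)}=\bar t_{21}^{(0)}=0$, $t_{ii}^{(0)}\bar t_{ii}^{(0)}=\bar t_{ii}^{(0)}t_{ii}^{(0)}$, inverse relations, $R(u,v)T_1(u)T_2(v)=T_2(v)T_1(u)R(u,v)$,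 $R(u,v)\overline T_1(u)\overline T_2(v)=\overline T_2(v)\overline T_1(u)R(u,v)$, $R(u,v)\overline T_1(u)T_2(v)=T_2(v)\overline T_1(u)R(u,v)$. $\mathrm{Y}'_q(\mathfrak{sp}_2)$ is its subalgebra generated by the coefficients of $s_{ij}(u)=q\,t_{i1}(u)\bar t_{j2}(u^{-1})-t_{i2}(u)\bar t_{j1}(u^{-1})$ and by $(s_{12}^{(0)})^{-1}$; $\bar s_{ij}(u)=q\,\bar t_{i1}(u)t_{j2}(u^{-1})-\bar t_{i2}(u)t_{j1}(u^{-1})$. $V(\mu(u);\bar\mu(u))$ is the unique irreducible quotient of the Verma module, the quotient of $\mathrm{Y}'_q(\mathfrak{sp}_2)$ by the left ideal generated by the coefficients of $s_{11}(u)$, $s_{21}(u)-\mu(u)$ and $\bar s_{21}(u)-\bar\mu(u)$. *)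

From HB Require Import structures.
From mathcomp Require Import all_boot all_order all_algebra.
From mathcomp Require Import complex.
From mathcomp Require Import Rstruct.
Set Implicit Arguments. Unset Strict Implicit. Unset Printing Implicit Defensive.
Import Order.TTheory GRing.Theory Num.Theory.
Local Open Scope ring_scope.

Notation C := (complex Rdefinitions.R).

(* Indices 1 and 2 of the paper are ord0 and ord_max in 'I_2. *)
Definition i1 : 'I_2 := ord0.
Definition i2 : 'I_2 := ord_max.

(* Generators of the free algebra:
   GT i j r = t_ij^(r), GTb i j r = \bar t_ij^(r),
   GTinv i = (t_ii^(0))^{-1}, GTbinv i = (\bar t_ii^(0))^{-1}. *)
Inductive gen : Type :=
| GT of 'I_2 & 'I_2 & nat
| GTb of 'I_2 & 'I_2 & nat
| GTinv of 'I_2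
| GTbinv of 'I_2.

Inductive term : Type :=
| Cst of C
| Gv of gen
| Add of term & term
| Mul of term & term.

Definition tsum (A : Type) (s : seq A) (f : A -> term) : term :=
  foldr (fun a acc => Add (f a) acc) (Cst 0) s.

(* Coefficient of E_ab (x) E_cd in R(u,v), as the pair (alpha, beta)
   meaning alpha * u + beta * v. *)
Definition Rc (q : C) (a b c d : 'I_2) : C * C :=
  if (a == b) && (c == d) then
    (if a == c then (q^-1, - q) else (1, -1))
  else if (a != b) && (c == b) && (d == a) then
    (if (b < a)%N then (q^-1 - q, 0) else (0, q^-1 - q))
  else (0, 0).

(* Coefficient of u^r (r : int) in the series t_ij(u) = sum_r t_ij^(r) u^(-r)
   and in \bar t_ij(u) = sum_r \bar t_ij^(r) u^r. *)
Definition tco (i j : 'I_2) (r : int) : term :=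
  if r <= 0 then Gv (GT i j `|r|%N) else Cst 0.
Definition tbco (i j : 'I_2) (r : int) : term :=
  if 0 <= r then Gv (GTb i j `|r|%N) else Cst 0.

(* Relation R(u,v) X_1(u) Y_2(v) = Y_2(v) X_1(u) R(u,v), where X, Y give the
   coefficient of u^k of the entries of the matrices X(u), Y(v).
   Entry at E_af (x) E_ch, coefficient of u^m v^n. *)
Definition rxy_lhs q (X Y : 'I_2 -> 'I_2 -> int -> term) (a f c h : 'I_2)
    (m n : int) : term :=
  tsum (enum 'I_2) (fun b => tsum (enum 'I_2) (fun d =>
    Add (Mul (Cst (Rc q a b c d).1) (Mul (X b f (m - 1)) (Y d h n)))
        (Mul (Cst (Rc q a b c d).2) (Mul (X b f m) (Y d h (n - 1)))))).
Definition rxy_rhs q (X Y : 'I_2 -> 'I_2 -> int -> term) (a f c h : 'I_2)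
    (m n : int) : term :=
  tsum (enum 'I_2) (fun b => tsum (enum 'I_2) (fun d =>
    Add (Mul (Cst (Rc q b f d h).1) (Mul (Y c d n) (X a b (m - 1))))
        (Mul (Cst (Rc q b f d h).2) (Mul (Y c d (n - 1)) (X a b m))))).

Inductive defrel (q : C) : term -> term -> Prop :=
| dr_t12 : defrel q (Gv (GT i1 i2 0)) (Cst 0)
| dr_tb21 : defrel q (Gv (GTb i2 i1 0)) (Cst 0)
| dr_comm i : defrel q (Mul (Gv (GT i i 0)) (Gv (GTb i i 0)))
                       (Mul (Gv (GTb i i 0)) (Gv (GT i i 0)))
| dr_tinvr i : defrel q (Mul (Gv (GT i i 0)) (Gv (GTinv i))) (Cst 1)
| dr_tinvl i : defrel q (Mul (Gv (GTinv i)) (Gv (GT i i 0))) (Cst 1)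
| dr_tbinvr i : defrel q (Mul (Gv (GTb i i 0)) (Gv (GTbinv i))) (Cst 1)
| dr_tbinvl i : defrel q (Mul (Gv (GTbinv i)) (Gv (GTb i i 0))) (Cst 1)
| dr_TT a f c h m n :
    defrel q (rxy_lhs q tco tco a f c h m n) (rxy_rhs q tco tco a f c h m n)
| dr_TbTb a f c h m n :
    defrel q (rxy_lhs q tbco tbco a f c h m n) (rxy_rhs q tbco tbco a f c h m n)
| dr_TbT a f c h m n :
    defrel q (rxy_lhs q tbco tco a f c h m n) (rxy_rhs q tbco tco a f c h m n).

(* Equality in U^ext_q(\hat gl_2): the congruence on terms generated by the
   axioms of unital associative C-algebras and the defining relations, i.e.
   the free algebra modulo the two-sided ideal generated by the relations. *)
Inductive aeq (q : C) : term -> term -> Prop :=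
| ae_rel x y : defrel q x y -> aeq q x y
| ae_refl x : aeq q x x
| ae_sym x y : aeq q x y -> aeq q y x
| ae_trans x y z : aeq q x y -> aeq q y z -> aeq q x z
| ae_add x x' y y' : aeq q x x' -> aeq q y y' -> aeq q (Add x y) (Add x' y')
| ae_mul x x' y y' : aeq q x x' -> aeq q y y' -> aeq q (Mul x y) (Mul x' y')
| ae_addA x y z : aeq q (Add x (Add y z)) (Add (Add x y) z)
| ae_addC x y : aeq q (Add x y) (Add y x)
| ae_add0 x : aeq q (Add (Cst 0) x) x
| ae_addN x : aeq q (Add x (Mul (Cst (-1)) x)) (Cst 0)
| ae_mulA x y z : aeq q (Mul x (Mul y z)) (Mul (Mul x y) z)
| ae_mul1l x : aeq q (Mul (Cst 1) x) x
| ae_mul1r x : aeq q (Mul x (Cst 1)) x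
| ae_mulDl x y z : aeq q (Mul (Add x y) z) (Add (Mul x z) (Mul y z))
| ae_mulDr x y z : aeq q (Mul x (Add y z)) (Add (Mul x y) (Mul x z))
| ae_cstD a b : aeq q (Cst (a + b)) (Add (Cst a) (Cst b))
| ae_cstM a b : aeq q (Cst (a * b)) (Mul (Cst a) (Cst b))
| ae_cstC a x : aeq q (Mul (Cst a) x) (Mul x (Cst a)).

Definition tN (i j : 'I_2) (r : nat) : term := Gv (GT i j r).
Definition tbN (i j : 'I_2) (r : nat) : term := Gv (GTb i j r).

(* s_ij^(r): coefficient of u^(-r) in
   s_ij(u) = q t_i1(u) \bar t_j2(u^-1) - t_i2(u) \bar t_j1(u^-1). *)
Definition s_coef (q : C) (i j : 'I_2) (r : nat) : term :=
  tsum (iota 0 r.+1) (fun a =>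
    Add (Mul (Cst q) (Mul (tN i i1 a) (tbN j i2 (r - a))))
        (Mul (Cst (-1)) (Mul (tN i i2 a) (tbN j i1 (r - a))))).

(* \bar s_ij^(r): coefficient of u^r in
   \bar s_ij(u) = q \bar t_i1(u) t_j2(u^-1) - \bar t_i2(u) t_j1(u^-1). *)
Definition sb_coef (q : C) (i j : 'I_2) (r : nat) : term :=
  tsum (iota 0 r.+1) (fun a =>
    Add (Mul (Cst q) (Mul (tbN i i1 a) (tN j i2 (r - a))))
        (Mul (Cst (-1)) (Mul (tbN i i2 a) (tN j i1 (r - a))))).

(* Membership in the subalgebra Y'_q(sp_2) of U^ext_q(\hat gl_2), generated
   by the coefficients of the s_ij(u) and by the inverse of s_12^(0). *)
Inductive inY (q : C) : term -> Prop :=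
| Y_cst c : inY q (Cst c)
| Y_s i j r : inY q (s_coef q i j r)
| Y_sinv x : aeq q (Mul x (s_coef q i1 i2 0)) (Cst 1) ->
             aeq q (Mul (s_coef q i1 i2 0) x) (Cst 1) -> inY q x
| Y_add x y : inY q x -> inY q y -> inY q (Add x y)
| Y_mul x y : inY q x -> inY q y -> inY q (Mul x y)
| Y_eq x y : inY q x -> aeq q x y -> inY q y.

Definition is_lideal (q : C) (L : term -> Prop) : Prop :=
  [/\ (forall x y, aeq q x y -> L x -> L y),
      (forall x, L x -> inY q x),
      L (Cst 0),
      (forall x y, L x -> L y -> L (Add x y)) &
      (forall y x, inY q y -> L x -> L (Mul y x))].

(* Generators of the left ideal defining the Verma module:
   coefficients of s_11(u), s_21(u) - mu(u), \bar s_21(u) - \bar mu(u). *)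
Definition verma_gen (q : C) (mu mub : nat -> C) (x : term) : Prop :=
  exists r : nat,
    [\/ x = s_coef q i1 i1 r,
        x = Add (s_coef q i2 i1 r) (Cst (- mu r)) |
        x = Add (sb_coef q i2 i1 r) (Cst (- mub r))].

(* Y'/L is an irreducible quotient of the Verma module Y'/J, i.e. L is a
   left ideal of Y' containing J, proper, and maximal among proper left
   ideals. (By the paper, this quotient is unique: it is V(mu(u);\bar mu(u)).) *)
Definition irr_verma_quot (q : C) (mu mub : nat -> C) (L : term -> Prop) : Prop :=
  [/\ is_lideal q L,
      (forall g, verma_gen q mu mub g -> L g),
      ~ L (Cst 1) &
      (forall L' : term -> Prop, is_lideal q L' -> (forall x, L x -> L' x) ->
          ~ L' (Cst 1) -> forall x, L' x -> L x)].

(* Y'/L is finite-dimensional over C: finitely many elements of Y' span it. *)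
Definition fin_dim_quot (q : C) (L : term -> Prop) : Prop :=
  exists bs : seq term,
    (forall k, (k < size bs)%N -> inY q (nth (Cst 0) bs k)) /\
    forall y, inY q y -> exists cs : seq C,
      L (Add y (Mul (Cst (-1))
                    (tsum (zip cs bs) (fun p => Mul (Cst p.1) p.2)))).

(* Write s_ij for s_ij^(0). Since t_12^(0) = \bar t_21^(0) = 0, the element
   s_12 = q t_11^(0) \bar t_22^(0) is invertible in Y'_q(sp_2), and
   e = s_12^-1 s_11, f = s_12^-1 s_22, h = q (f e - s_12^-1 s_21) satisfy
   e f = q^2 f e + (q - q^3)(1 - h) and h f = q^4 f h. These identities only
   involve the degree-zero generators and are checked by rewriting words into
   a normal form with the quadratic RTT relations.
   If mu^(0) = 0, then e and h lie in the left ideal L, so modulo L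
   e^j f^k = c_jk f^(k-j) with c_jk = 0 for k < j and c_kk <> 0 because q is
   not a root of unity. Finite dimensionality gives a relation
   sum_(k <= K) a_k f^k in L with a_K <> 0; applying e^K puts the nonzero
   scalar a_K c_KK in L. If \bar mu^(0) = 0, then L contains the unit
   \bar s_21^(0) = - \bar t_22^(0) t_11^(0). Either way L is not proper. *)

From HB Require Import structures.
From mathcomp Require Import all_boot all_order all_algebra.
From mathcomp Require Import complex.
From mathcomp Require Import Rstruct.
From mathcomp Require Import ring.
From Stdlib Require Import Setoid Morphisms PeanoNat IndefiniteDescription.
Import Order.TTheory GRing.Theory Num.Theory.
Local Open Scope ring_scope.

#[export] Instance aeq_equiv (q : C) : Equivalence (aeq q).
Proof. split; [exact: ae_refl | exact: ae_sym | exact: ae_trans]. Qed.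
#[export] Instance Add_aeq_proper (q : C) : Proper (aeq q ==> aeq q ==> aeq q) Add.
Proof. by move=> ? ? ? ? ? ?; apply: ae_add. Qed.
#[export] Instance Mul_aeq_proper (q : C) : Proper (aeq q ==> aeq q ==> aeq q) Mul.
Proof. by move=> ? ? ? ? ? ?; apply: ae_mul. Qed.

#[export] Hint Resolve ae_refl : core.

Notation m1 := (Cst (-1)).

Section AlgebraLaws.
Context {q : C}.
Local Notation "x ~ y" := (aeq q x y) (at level 70).

Lemma ae_addr0 x : Add x (Cst 0) ~ x.
Proof. by rewrite ae_addC ae_add0. Qed.

Lemma ae_addNl x : Add (Mul m1 x) x ~ Cst 0.
Proof. by rewrite ae_addC ae_addN. Qed.

Lemma ae_mul0l x : Mul (Cst 0) x ~ Cst 0.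
Proof.
set z := Mul (Cst 0) x.
have zD : z ~ Add z z by rewrite /z -ae_mulDl -ae_cstD addr0.
by rewrite -(ae_addN q z) {2}zD -ae_addA ae_addN ae_addr0.
Qed.

Lemma ae_mul0r x : Mul x (Cst 0) ~ Cst 0.
Proof. by rewrite -ae_cstC ae_mul0l. Qed.

Lemma ae_scaleA a b x : Mul (Cst a) (Mul (Cst b) x) ~ Mul (Cst (a * b)) x.
Proof. by rewrite ae_mulA -ae_cstM. Qed.

Lemma ae_scale_mull a y z : Mul (Mul (Cst a) y) z ~ Mul (Cst a) (Mul y z).
Proof. by rewrite ae_mulA. Qed.

Lemma ae_scale_mulr a y z : Mul y (Mul (Cst a) z) ~ Mul (Cst a) (Mul y z).
Proof. by rewrite ae_mulA -(ae_cstC q a y) -ae_mulA. Qed.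

Lemma ae_addACA a b c d : Add (Add a b) (Add c d) ~ Add (Add a c) (Add b d).
Proof.
rewrite -(ae_addA q a b) (ae_addA q b c d) (ae_addC q b c).
by rewrite -(ae_addA q c b d) (ae_addA q a c).
Qed.

Lemma ae_subr_eq0 x y : Add x (Mul m1 y) ~ Cst 0 -> x ~ y.
Proof. by move=> xy0; rewrite -(ae_addr0 x) -(ae_addNl y) ae_addA xy0 ae_add0. Qed.

Lemma ae_subr0 x : Add x (Mul m1 (Cst 0)) ~ x.
Proof. by rewrite ae_mul0r ae_addr0. Qed.

Lemma ae_subKC x y z : Add (Add x (Mul m1 y)) (Add y (Mul m1 z)) ~ Add x (Mul m1 z).
Proof. by rewrite -(ae_addA q x) (ae_addA q _ y) ae_addNl ae_add0. Qed.

Lemma ae_mulrBr w x y : Mul w (Add x (Mul m1 y)) ~ Add (Mul w x) (Mul m1 (Mul w y)).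
Proof. by rewrite ae_mulDr ae_scale_mulr. Qed.

Lemma ae_opprB x y : Mul m1 (Add x (Mul m1 y)) ~ Add y (Mul m1 x).
Proof. by rewrite ae_mulDr ae_scaleA mulrNN mulr1 ae_mul1l ae_addC. Qed.

Lemma ae_subDD x1 y1 x2 y2 :
  Add (Add x1 (Mul m1 y1)) (Add x2 (Mul m1 y2)) ~ Add (Add x1 x2) (Mul m1 (Add y1 y2)).
Proof. by rewrite ae_addACA (ae_mulDr q m1 y1). Qed.

End AlgebraLaws.

(* Comparisons go through [Nat.eqb] rather than [==] so that [cbv] evaluates them. *)
Definition ord_eqb (i j : 'I_2) := Nat.eqb i j.

Lemma ord_eqbP {i j} : ord_eqb i j = true -> i = j.
Proof. by move/Nat.eqb_eq; apply: val_inj. Qed.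

Definition gen_eqb (g h : gen) : bool :=
  match g, h with
  | GT i j r, GT i' j' r' | GTb i j r, GTb i' j' r' =>
      ord_eqb i i' && ord_eqb j j' && Nat.eqb r r'
  | GTinv i, GTinv i' | GTbinv i, GTbinv i' => ord_eqb i i'
  | _, _ => false
  end.

Lemma gen_eqbP {g h} : gen_eqb g h = true -> g = h.
Proof.
case: g h => [i j r|i j r|i|i] [i' j' r'|i' j' r'|i'|i'] //=;
  by [case/andP=> /andP[/ord_eqbP -> /ord_eqbP ->] /Nat.eqb_eq -> | move/ord_eqbP ->].
Qed.

Fixpoint word_eqb (u w : seq gen) : bool :=
  match u, w with
  | [::], [::] => true
  | x :: u', y :: w' => gen_eqb x y && word_eqb u' w'
  | _, _ => false
  end.

Lemma word_eqbP {u w} : word_eqb u w = true -> u = w.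
Proof. by elim: u w => [|x u IH] [|y w] //= /andP[/gen_eqbP -> /IH ->]. Qed.

(** * Noncommutative normal forms *)

Definition ncpoly := seq (C * seq gen).

Definition word_term (w : seq gen) : term := foldr (fun g t => Mul (Gv g) t) (Cst 1) w.
Definition ncpoly_term (p : ncpoly) : term :=
  foldr (fun m t => Add (Mul (Cst m.1) (word_term m.2)) t) (Cst 0) p.

Definition ncpoly_scale (c : C) (u v : seq gen) (p : ncpoly) : ncpoly :=
  map (fun m => (c * m.1, u ++ m.2 ++ v)) p.

Fixpoint ncpoly_mul (p1 p2 : ncpoly) : ncpoly :=
  if p1 is m :: p then ncpoly_scale m.1 m.2 [::] p2 ++ ncpoly_mul p p2 else [::].

Fixpoint ncpoly_of_term (x : term) : ncpoly :=
  match x with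
  | Cst c => [:: (c, [::])]
  | Gv g => [:: (1, [:: g])]
  | Add x y => ncpoly_of_term x ++ ncpoly_of_term y
  | Mul x y => ncpoly_mul (ncpoly_of_term x) (ncpoly_of_term y)
  end.

Section NormalForm.
Context {q : C}.
Local Notation "x ~ y" := (aeq q x y) (at level 70).

Lemma word_term_cat u w : word_term (u ++ w) ~ Mul (word_term u) (word_term w).
Proof.
elim: u => [|g u IH] /=; first by rewrite ae_mul1l.
by rewrite IH ae_mulA.
Qed.

Lemma ncpoly_term_cat p1 p2 :
  ncpoly_term (p1 ++ p2) ~ Add (ncpoly_term p1) (ncpoly_term p2).
Proof.
elim: p1 => [|m p IH] /=; first by rewrite ae_add0.
by rewrite IH ae_addA.
Qed.

Lemma ncpoly_term_scale c u v p :
  ncpoly_term (ncpoly_scale c u v p)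
  ~ Mul (Cst c) (Mul (word_term u) (Mul (ncpoly_term p) (word_term v))).
Proof.
elim: p => [|m p IH] /=; first by rewrite ae_mul0l !ae_mul0r.
rewrite IH !ae_mulDl !ae_mulDr; apply: ae_add => //.
by rewrite !word_term_cat ae_scale_mull ae_scale_mulr ae_scaleA !ae_mulA.
Qed.

Lemma ncpoly_term_mul p1 p2 :
  ncpoly_term (ncpoly_mul p1 p2) ~ Mul (ncpoly_term p1) (ncpoly_term p2).
Proof.
elim: p1 => [|m p IH] /=; first by rewrite ae_mul0l.
by rewrite ncpoly_term_cat ncpoly_term_scale IH /= ae_mul1r ae_mulDl !ae_mulA.
Qed.

Lemma ncpoly_of_termK x : x ~ ncpoly_term (ncpoly_of_term x).
Proof.
elim: x => [c|g|x IHx y IHy|x IHx y IHy] /=.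
- by rewrite ae_addr0 ae_mul1r.
- by rewrite ae_addr0 ae_mul1l ae_mul1r.
- by rewrite ncpoly_term_cat -IHx -IHy.
- by rewrite ncpoly_term_mul -IHx -IHy.
Qed.

End NormalForm.

(* A rewrite rule replaces an occurrence of the word [r.1] by the polynomial [r.2]. *)
Definition rule := (seq gen * ncpoly)%type.

Fixpoint strip_prefix (u w : seq gen) : option (seq gen) :=
  match u, w with
  | [::], w => Some w
  | x :: u', y :: w' => if gen_eqb x y then strip_prefix u' w' else None
  | _, [::] => None
  end.

Lemma strip_prefixP {u w r} : strip_prefix u w = Some r -> w = u ++ r.
Proof.
elim: u w => [|x u IH] [|y w] //=; try by case=> ->.
by case E: (gen_eqb x y) => // /IH ->; rewrite (gen_eqbP E).
Qed.

Fixpoint find_factor (u w : seq gen) : option (seq gen * seq gen) :=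
  if strip_prefix u w is Some r then Some ([::], r) else
  if w is y :: w' then
    if find_factor u w' is Some (w1, w2) then Some (y :: w1, w2) else None
  else None.

Lemma find_factorP {u w w1 w2} : find_factor u w = Some (w1, w2) -> w = w1 ++ u ++ w2.
Proof.
elim: w w1 w2 => [|y w IH] w1 w2 /=;
  case E: (strip_prefix u _) => [r|] //; try by case=> <- <-; exact: strip_prefixP E.
by case F: (find_factor u w) => [[a b]|] // [<- <-]; rewrite (IH _ _ F).
Qed.

Fixpoint rewrite_monomial (rs : seq rule) (c : C) (w : seq gen) : option ncpoly :=
  if rs is r :: rs' then
    if find_factor r.1 w is Some (w1, w2) then Some (ncpoly_scale c w1 w2 r.2)
    else rewrite_monomial rs' c w
  else None.

Fixpoint rewrite_step (rs : seq rule) (p : ncpoly) : ncpoly :=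
  if p is m :: p' then
    if rewrite_monomial rs m.1 m.2 is Some p1 then p1 ++ rewrite_step rs p'
    else m :: rewrite_step rs p'
  else [::].

Definition rewrite_iter (rs : seq rule) (n : nat) (p : ncpoly) : ncpoly :=
  iter n (rewrite_step rs) p.

Definition rules_sound q (rs : seq rule) :=
  forall r, List.In r rs -> aeq q (word_term r.1) (ncpoly_term r.2).

Fixpoint coef_of (w : seq gen) (p : ncpoly) : C :=
  if p is m :: p' then (if word_eqb m.2 w then m.1 else 0) + coef_of w p' else 0.

Definition drop_word (w : seq gen) (p : ncpoly) : ncpoly :=
  filter (fun m => ~~ word_eqb m.2 w) p.

(* [ncpoly_zero n p] computes to a conjunction of equations in C stating that all
   coefficients of [p] vanish; [n] bounds the number of distinct words. *)
Fixpoint ncpoly_zero (n : nat) (p : ncpoly) : Prop :=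
  if n is n'.+1 then
    if p is m :: p' then m.1 + coef_of m.2 p' = 0 /\ ncpoly_zero n' (drop_word m.2 p')
    else True
  else p = [::].

Section Rewriting.
Context {q : C}.
Local Notation "x ~ y" := (aeq q x y) (at level 70).

Lemma rules_sound_cat {rs1 rs2} :
  rules_sound q rs1 -> rules_sound q rs2 -> rules_sound q (rs1 ++ rs2).
Proof. by move=> h1 h2 r /(List.in_app_or rs1 rs2 r) [/h1|/h2]. Qed.

Lemma rewrite_monomialP {rs c w p} : rules_sound q rs -> rewrite_monomial rs c w = Some p ->
  Mul (Cst c) (word_term w) ~ ncpoly_term p.
Proof.
elim: rs => [|r rs IH] //= hrs.
case E: (find_factor r.1 w) => [[w1 w2]|].
  case=> <-; rewrite ncpoly_term_scale (find_factorP E) !word_term_cat.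
  by rewrite (hrs r (or_introl erefl)).
by apply: IH => r' hr'; apply: hrs; right.
Qed.

Lemma rewrite_iterP rs n p : rules_sound q rs ->
  ncpoly_term p ~ ncpoly_term (rewrite_iter rs n p).
Proof.
move=> hrs; elim: n => [|n ->] //=; elim: (rewrite_iter rs n p) => [|[c w] p' IH] //=.
case E: (rewrite_monomial rs c w) => [p1|] /=; last by rewrite -IH.
by rewrite ncpoly_term_cat -IH (rewrite_monomialP hrs E).
Qed.

Lemma ncpoly_term_split w p :
  ncpoly_term p ~ Add (Mul (Cst (coef_of w p)) (word_term w)) (ncpoly_term (drop_word w p)).
Proof.
elim: p => [|[c u] p IH] /=; first by rewrite ae_mul0l ae_add0.
rewrite ae_cstD ae_mulDl -ae_addA IH.
case E: (word_eqb u w) => /=.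
  by rewrite (word_eqbP E) ae_addA.
by rewrite ae_mul0l ae_add0 !ae_addA (ae_addC q (Mul (Cst c) (word_term u))).
Qed.

Lemma ncpoly_zeroP n p : ncpoly_zero n p -> ncpoly_term p ~ Cst 0.
Proof.
elim: n p => [|n IH] [|[c w] p] //= [h1 /IH h2].
by rewrite (ncpoly_term_split w p) h2 ae_addr0 -ae_mulDl -ae_cstD h1 ae_mul0l.
Qed.

Definition rewrite_diff rs n X Y := rewrite_iter rs n (ncpoly_of_term (Add X (Mul m1 Y))).

Lemma ae_by_rewriting {rs} n {X Y} : rules_sound q rs ->
  ncpoly_zero (size (rewrite_diff rs n X Y)) (rewrite_diff rs n X Y) -> X ~ Y.
Proof.
move=> hrs /ncpoly_zeroP h; apply: ae_subr_eq0.
by rewrite (ncpoly_of_termK (Add X _)) (rewrite_iterP _ n _ hrs).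
Qed.

(* Rewriting modulo a further relation [l ~ r], added with a multiplier [c]. *)
Lemma ae_by_rewriting_using {rs} n c {X Y l r} : rules_sound q rs -> l ~ r ->
  let P := rewrite_diff rs n X (Add Y (Mul (Cst c) (Add l (Mul m1 r)))) in
  ncpoly_zero (size P) P -> X ~ Y.
Proof.
move=> hrs lr P /(ae_by_rewriting n hrs).
by rewrite lr ae_addN ae_mul0r ae_addr0.
Qed.

End Rewriting.

(** * Relations among the degree-zero generators *)

Notation t11 := (GT i1 i1 0).
Notation t21 := (GT i2 i1 0).
Notation t22 := (GT i2 i2 0).
Notation tb11 := (GTb i1 i1 0).
Notation tb12 := (GTb i1 i2 0).
Notation tb22 := (GTb i2 i2 0).
Notation t11inv := (GTinv i1).
Notation tb22inv := (GTbinv i2).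

Definition qcomm q c (x y : gen) :=
  aeq q (Mul (Gv x) (Gv y)) (Mul (Cst c) (Mul (Gv y) (Gv x))).

Definition qcomm_rule c x y : rule := ([:: x; y], [:: (c, [:: y; x])]).
Definition inverse_rule x y : rule := ([:: x; y], [:: (1, [::])]).

Section QuasiCommutation.
Context {q : C}.
Local Notation "x ~ y" := (aeq q x y) (at level 70).

Lemma qcomm_rule_cons {c x y rs} :
  qcomm q c x y -> rules_sound q rs -> rules_sound q (qcomm_rule c x y :: rs).
Proof. by move=> xy hrs r /= [<-|/hrs] //=; rewrite ae_addr0 !ae_mul1r. Qed.

Lemma inverse_rule_cons {x y rs} :
  Mul (Gv x) (Gv y) ~ Cst 1 -> rules_sound q rs -> rules_sound q (inverse_rule x y :: rs).
Proof. by move=> xy hrs r /= [<-|/hrs] //=; rewrite ae_addr0 ae_mul1r ae_mul1l. Qed.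

Lemma qcomm_sym {c x y} : c != 0 -> qcomm q c x y -> qcomm q c^-1 y x.
Proof. by move=> c0 xy; rewrite /qcomm xy ae_scaleA mulVf // ae_mul1l. Qed.

Section Inverse.
Context {x xi : gen} (x_xi : Mul (Gv x) (Gv xi) ~ Cst 1) (xi_x : Mul (Gv xi) (Gv x) ~ Cst 1).

Lemma qcomm_invl {c y} : c != 0 -> qcomm q c x y -> qcomm q c^-1 xi y.
Proof.
move=> c0 /(qcomm_sym c0) yx.
rewrite /qcomm -{1}(ae_mul1r q (Mul (Gv xi) (Gv y))) -x_xi.
rewrite -ae_mulA (ae_mulA q (Gv y)) yx ae_scale_mull ae_scale_mulr.
by apply: ae_mul => //; rewrite !ae_mulA xi_x ae_mul1l.
Qed.

Lemma qcomm_invr {c y} : c != 0 -> qcomm q c y x -> qcomm q c^-1 y xi.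
Proof.
move=> c0 yx; apply: (qcomm_sym c0); rewrite -[c]invrK.
by apply: qcomm_invl; [exact: invr_neq0 | exact: qcomm_sym].
Qed.

End Inverse.
End QuasiCommutation.

Definition vanishing_rules : seq rule :=
  [:: ([:: GT i1 i2 0], [::]); ([:: GTb i2 i1 0], [::])].

Definition inverse_rules : seq rule :=
  [:: inverse_rule t11 t11inv; inverse_rule t11inv t11;
      inverse_rule tb22 tb22inv; inverse_rule tb22inv tb22].

Definition tb12_t21_rule q : rule :=
  ([:: tb12; t21], [:: (1, [:: t21; tb12]); (q^-1 - q, [:: t11; tb22]);
                       (q - q^-1, [:: t22; tb11])]).

Definition rtt_rules q : seq rule :=
  [:: qcomm_rule q^-1 t11 t21; qcomm_rule 1 t22 t11; qcomm_rule q t22 t21;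
      qcomm_rule q^-1 tb11 tb12; qcomm_rule 1 tb22 tb11; qcomm_rule q tb22 tb12;
      qcomm_rule 1 tb11 t11; qcomm_rule q tb11 t21; qcomm_rule 1 tb11 t22;
      qcomm_rule q t11 tb12; qcomm_rule q^-1 t22 tb12; qcomm_rule 1 tb22 t11;
      qcomm_rule q^-1 tb22 t21; qcomm_rule 1 tb22 t22; tb12_t21_rule q].

Definition inverse_comm_rules q : seq rule :=
  [:: qcomm_rule q t11inv t21; qcomm_rule q^-1 t11inv tb12; qcomm_rule 1 t22 t11inv;
      qcomm_rule 1 tb11 t11inv; qcomm_rule 1 tb22 t11inv; qcomm_rule q tb22inv t21;
      qcomm_rule q^-1 tb22inv tb12; qcomm_rule 1 tb22inv t11; qcomm_rule 1 tb22inv t22;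
      qcomm_rule 1 tb22inv tb11; qcomm_rule 1 tb22inv t11inv].

(* Oriented so that normal words are sorted along
   t21 < tb12 < t11, t11inv < t22 < tb11 < tb22, tb22inv. *)
Definition degree0_rules q : seq rule :=
  vanishing_rules ++ inverse_rules ++ inverse_comm_rules q ++ rtt_rules q.

(* Every definition the rewriting touches must be unfolded: on a stuck match
   [cbv] normalises both branches, and the recursion then blows up. *)
Ltac rewriting_eval :=
  cbv beta iota zeta delta [ncpoly_term word_term foldr rewrite_diff rewrite_iter iter
    rewrite_step rewrite_monomial find_factor strip_prefix ncpoly_scale map ncpoly_of_term
    ncpoly_mul ncpoly_zero coef_of drop_word filter word_eqb gen_eqb ord_eqb Nat.eqb andb
    negb nat_of_ord i1 i2 ord0 ord_max size cat fst snd s_coef sb_coef tsum iota tN tbN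
    subn Nat.sub vanishing_rules inverse_rules tb12_t21_rule rtt_rules inverse_comm_rules
    degree0_rules qcomm_rule inverse_rule];
  repeat (split || exact I); field; done.

Lemma enum_I2 : enum 'I_2 = [:: i1; i2].
Proof. by apply: (inj_map val_inj); rewrite val_enum_ord. Qed.

(* Extracts the coefficient of [u^m v^n] of an RTT relation at the given matrix
   entry and checks the goal against it, up to the multiplier [c]. *)
Tactic Notation "by_rtt" constr(rel) uconstr(c) constr(rs_sound) :=
  hnf; let rtt := fresh "rtt" in
  pose proof (ae_rel rel) as rtt;
  rewrite /rxy_lhs /rxy_rhs enum_I2 /tco /tbco /= in rtt;
  refine (ae_by_rewriting_using 10%N c rs_sound rtt _); rewriting_eval.

Section DegreeZero.
Context {q : C} (q0 : q != 0).

Lemma vanishing_rules_sound : rules_sound q vanishing_rules.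
Proof. by move=> r /= [<-|[<-|//]] /=; rewrite ae_mul1r; apply: ae_rel; constructor. Qed.

Let V : rules_sound q vanishing_rules := vanishing_rules_sound.

Lemma t11_t21_comm : qcomm q q^-1 t11 t21.
Proof. by_rtt (dr_TT q i1 i1 i2 i1 1 0) 1 V. Qed.
Lemma t22_t11_comm : qcomm q 1 t22 t11.
Proof. by_rtt (dr_TT q i1 i1 i2 i2 1 0) (-1) V. Qed.
Lemma t22_t21_comm : qcomm q q t22 t21.
Proof. by_rtt (dr_TT q i2 i2 i2 i1 1 0) q V. Qed.
Lemma tb11_tb12_comm : qcomm q q^-1 tb11 tb12.
Proof. by_rtt (dr_TbTb q i1 i1 i1 i2 0 1) (- q^-1) V. Qed.
Lemma tb22_tb11_comm : qcomm q 1 tb22 tb11.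
Proof. by_rtt (dr_TbTb q i1 i1 i2 i2 0 1) 1 V. Qed.
Lemma tb22_tb12_comm : qcomm q q tb22 tb12.
Proof. by_rtt (dr_TbTb q i2 i2 i1 i2 0 1) (-1) V. Qed.
Lemma tb11_t11_comm : qcomm q 1 tb11 t11.
Proof. by_rtt (dr_TbT q i1 i1 i1 i1 0 1) (- q^-1) V. Qed.
Lemma tb11_t21_comm : qcomm q q tb11 t21.
Proof. by_rtt (dr_TbT q i1 i1 i2 i1 0 1) (-1) V. Qed.
Lemma tb11_t22_comm : qcomm q 1 tb11 t22.
Proof. by_rtt (dr_TbT q i1 i1 i2 i2 0 1) (-1) V. Qed.
Lemma t11_tb12_comm : qcomm q q t11 tb12.
Proof. by_rtt (dr_TbT q i1 i2 i1 i1 0 1) 1 V. Qed.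
Lemma t22_tb12_comm : qcomm q q^-1 t22 tb12.
Proof. by_rtt (dr_TbT q i1 i2 i2 i2 0 1) q^-1 V. Qed.
Lemma tb22_t11_comm : qcomm q 1 tb22 t11.
Proof. by_rtt (dr_TbT q i2 i2 i1 i1 0 1) (-1) V. Qed.
Lemma tb22_t21_comm : qcomm q q^-1 tb22 t21.
Proof. by_rtt (dr_TbT q i2 i2 i2 i1 0 1) (- q^-1) V. Qed.
Lemma tb22_t22_comm : qcomm q 1 tb22 t22.
Proof. by_rtt (dr_TbT q i2 i2 i2 i2 0 1) (- q^-1) V. Qed.

Lemma tb12_t21_rule_sound : rules_sound q [:: tb12_t21_rule q].
Proof.
have V' := qcomm_rule_cons tb22_t11_comm V.
by move=> r [<-|//]; by_rtt (dr_TbT q i1 i2 i2 i1 0 1) (-1) V'.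
Qed.

Let q1 : q^-1 != 0 := invr_neq0 q0.
Let one0 : (1 : C) != 0 := oner_neq0 C.
Let t11_t11inv := ae_rel (dr_tinvr q i1).
Let t11inv_t11 := ae_rel (dr_tinvl q i1).
Let tb22_tb22inv := ae_rel (dr_tbinvr q i2).
Let tb22inv_tb22 := ae_rel (dr_tbinvl q i2).

Lemma t11inv_t21_comm : qcomm q q t11inv t21.
Proof. by have := qcomm_invl t11_t11inv t11inv_t11 q1 t11_t21_comm; rewrite invrK. Qed.
Lemma t11inv_tb12_comm : qcomm q q^-1 t11inv tb12.
Proof. by have := qcomm_invl t11_t11inv t11inv_t11 q0 t11_tb12_comm. Qed.
Lemma t22_t11inv_comm : qcomm q 1 t22 t11inv.
Proof. by have := qcomm_invr t11_t11inv t11inv_t11 one0 t22_t11_comm; rewrite invr1. Qed.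
Lemma tb11_t11inv_comm : qcomm q 1 tb11 t11inv.
Proof. by have := qcomm_invr t11_t11inv t11inv_t11 one0 tb11_t11_comm; rewrite invr1. Qed.
Lemma tb22_t11inv_comm : qcomm q 1 tb22 t11inv.
Proof. by have := qcomm_invr t11_t11inv t11inv_t11 one0 tb22_t11_comm; rewrite invr1. Qed.
Lemma tb22inv_t21_comm : qcomm q q tb22inv t21.
Proof. by have := qcomm_invl tb22_tb22inv tb22inv_tb22 q1 tb22_t21_comm; rewrite invrK. Qed.
Lemma tb22inv_tb12_comm : qcomm q q^-1 tb22inv tb12.
Proof. by have := qcomm_invl tb22_tb22inv tb22inv_tb22 q0 tb22_tb12_comm. Qed.
Lemma tb22inv_t11_comm : qcomm q 1 tb22inv t11.
Proof. by have := qcomm_invl tb22_tb22inv tb22inv_tb22 one0 tb22_t11_comm; rewrite invr1. Qed.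
Lemma tb22inv_t22_comm : qcomm q 1 tb22inv t22.
Proof. by have := qcomm_invl tb22_tb22inv tb22inv_tb22 one0 tb22_t22_comm; rewrite invr1. Qed.
Lemma tb22inv_tb11_comm : qcomm q 1 tb22inv tb11.
Proof. by have := qcomm_invl tb22_tb22inv tb22inv_tb22 one0 tb22_tb11_comm; rewrite invr1. Qed.
Lemma tb22inv_t11inv_comm : qcomm q 1 tb22inv t11inv.
Proof. by have := qcomm_invl tb22_tb22inv tb22inv_tb22 one0 tb22_t11inv_comm; rewrite invr1. Qed.

Lemma inverse_rules_sound : rules_sound q inverse_rules.
Proof. by do 4!(apply: inverse_rule_cons; first by apply: ae_rel; constructor). Qed.

Lemma inverse_comm_rules_sound : rules_sound q (inverse_comm_rules q).
Proof.
apply: (qcomm_rule_cons t11inv_t21_comm); apply: (qcomm_rule_cons t11inv_tb12_comm).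
apply: (qcomm_rule_cons t22_t11inv_comm); apply: (qcomm_rule_cons tb11_t11inv_comm).
apply: (qcomm_rule_cons tb22_t11inv_comm); apply: (qcomm_rule_cons tb22inv_t21_comm).
apply: (qcomm_rule_cons tb22inv_tb12_comm); apply: (qcomm_rule_cons tb22inv_t11_comm).
apply: (qcomm_rule_cons tb22inv_t22_comm); apply: (qcomm_rule_cons tb22inv_tb11_comm).
by apply: (qcomm_rule_cons tb22inv_t11inv_comm).
Qed.

Lemma rtt_rules_sound : rules_sound q (rtt_rules q).
Proof.
apply: (qcomm_rule_cons t11_t21_comm); apply: (qcomm_rule_cons t22_t11_comm).
apply: (qcomm_rule_cons t22_t21_comm); apply: (qcomm_rule_cons tb11_tb12_comm).
apply: (qcomm_rule_cons tb22_tb11_comm); apply: (qcomm_rule_cons tb22_tb12_comm).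
apply: (qcomm_rule_cons tb11_t11_comm); apply: (qcomm_rule_cons tb11_t21_comm).
apply: (qcomm_rule_cons tb11_t22_comm); apply: (qcomm_rule_cons t11_tb12_comm).
apply: (qcomm_rule_cons t22_tb12_comm); apply: (qcomm_rule_cons tb22_t11_comm).
apply: (qcomm_rule_cons tb22_t21_comm); apply: (qcomm_rule_cons tb22_t22_comm).
exact: tb12_t21_rule_sound.
Qed.

Lemma degree0_rules_sound : rules_sound q (degree0_rules q).
Proof.
apply: (rules_sound_cat V); apply: (rules_sound_cat inverse_rules_sound).
exact: rules_sound_cat inverse_comm_rules_sound rtt_rules_sound.
Qed.

End DegreeZero.

(** * A quantum sl_2 inside Y'_q(sp_2) *)

(* [s0 q i j] is s_ij^(0); as t_12^(0) = 0, s_12^(0) = q t_11^(0) \bar t_22^(0) and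
   [xi q] is its inverse. *)
Definition s0 q i j := s_coef q i j 0.
Definition xi q := Mul (Cst q^-1) (Mul (Gv tb22inv) (Gv t11inv)).
Definition ee q := Mul (xi q) (s0 q i1 i1).
Definition ff q := Mul (xi q) (s0 q i2 i2).
Definition hh q := Mul (Cst q) (Add (Mul (ff q) (ee q)) (Mul m1 (Mul (xi q) (s0 q i2 i1)))).

Ltac by_rewriting n hrs :=
  rewrite /hh /ff /ee /xi /s0; refine (ae_by_rewriting n hrs _); rewriting_eval.

Section Sl2Relations.
Context {q : C} (q0 : q != 0).
Let R := degree0_rules_sound q0.

Lemma xi_s12 : aeq q (Mul (xi q) (s0 q i1 i2)) (Cst 1).
Proof. by_rewriting 40%N R. Qed.

Lemma s12_xi : aeq q (Mul (s0 q i1 i2) (xi q)) (Cst 1).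
Proof. by_rewriting 40%N R. Qed.

Lemma xi_sb21 : aeq q (Mul (Mul (Cst (- q)) (xi q)) (sb_coef q i2 i1 0)) (Cst 1).
Proof. by_rewriting 40%N R. Qed.

Lemma hh_ff : aeq q (Mul (hh q) (ff q)) (Mul (Cst (q ^+ 4)) (Mul (ff q) (hh q))).
Proof. by_rewriting 60%N R. Qed.

Lemma ee_ff : aeq q (Mul (ee q) (ff q))
  (Add (Mul (Cst (q ^+ 2)) (Mul (ff q) (ee q)))
       (Mul (Cst (q - q ^+ 3)) (Add (Cst 1) (Mul m1 (hh q))))).
Proof. by_rewriting 60%N R. Qed.

Lemma inY_xi : inY q (xi q).
Proof. exact: Y_sinv xi_s12 s12_xi. Qed.

Lemma inY_ee : inY q (ee q).
Proof. by apply: Y_mul; [exact: inY_xi | exact: Y_s]. Qed.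

Lemma inY_ff : inY q (ff q).
Proof. by apply: Y_mul; [exact: inY_xi | exact: Y_s]. Qed.

End Sl2Relations.

(** * Left ideals and finite-dimensional quotients *)

Definition eqmod (q : C) (L : term -> Prop) (x y : term) := L (Add x (Mul m1 y)).

Definition lincomb (s : seq nat) (c : nat -> C) (v : nat -> term) : term :=
  tsum s (fun k => Mul (Cst (c k)) (v k)).

Section LeftIdeal.
Context {q : C} {L : term -> Prop} (hL : is_lideal q L).
Local Notation "x ~ y" := (aeq q x y) (at level 70).
Local Notation "x == y [mod L ]" := (eqmod q L x y) (at level 70).

Lemma lideal_aeq {x y} : x ~ y -> L x -> L y.
Proof. by case: hL => h _ _ _ _; apply: h. Qed.

Lemma lideal0 : L (Cst 0).
Proof. by case: hL. Qed.

Lemma lidealD {x y} : L x -> L y -> L (Add x y).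
Proof. by case: hL => _ _ _ h _; apply: h. Qed.

Lemma lidealM {y x} : inY q y -> L x -> L (Mul y x).
Proof. by case: hL => _ _ _ _ h; apply: h. Qed.

Lemma lidealZ c {x} : L x -> L (Mul (Cst c) x).
Proof. exact/lidealM/Y_cst. Qed.

Lemma lideal_subr0 {x c} : c = 0 -> L (Add x (Cst (- c))) -> L x.
Proof. by move=> ->; apply: lideal_aeq; rewrite oppr0 ae_addr0. Qed.

Lemma lideal_unit {y x} : inY q y -> Mul y x ~ Cst 1 -> L x -> L (Cst 1).
Proof. by move=> Yy yx /(lidealM Yy); apply: lideal_aeq. Qed.

Lemma eqmod_aeq {x x' y y'} : x ~ x' -> y ~ y' -> x == y [mod L] -> x' == y' [mod L].
Proof. by move=> xx' yy'; apply: lideal_aeq; rewrite xx' yy'. Qed.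

Lemma aeq_eqmod {x y} : x ~ y -> x == y [mod L].
Proof. by move=> xy; apply: (lideal_aeq _ lideal0); rewrite xy ae_addN. Qed.

Lemma eqmod_trans y {x z} : x == y [mod L] -> y == z [mod L] -> x == z [mod L].
Proof. by move=> xy yz; apply: (lideal_aeq _ (lidealD xy yz)); apply: ae_subKC. Qed.

Lemma eqmod_sym {x y} : x == y [mod L] -> y == x [mod L].
Proof. by move=> /(lidealZ (-1)); apply: lideal_aeq; apply: ae_opprB. Qed.

Lemma eqmodMl {w x y} : inY q w -> x == y [mod L] -> Mul w x == Mul w y [mod L].
Proof. by move=> Yw /(lidealM Yw); apply: lideal_aeq; apply: ae_mulrBr. Qed.

Lemma eqmodZ c {x y} : x == y [mod L] -> Mul (Cst c) x == Mul (Cst c) y [mod L].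
Proof. exact/eqmodMl/Y_cst. Qed.

Lemma eqmodD {x1 y1 x2 y2} :
  x1 == y1 [mod L] -> x2 == y2 [mod L] -> Add x1 x2 == Add y1 y2 [mod L].
Proof. by move=> h1 h2; apply: (lideal_aeq _ (lidealD h1 h2)); apply: ae_subDD. Qed.

Lemma lideal_eqmod0 {x} : L x -> x == Cst 0 [mod L].
Proof. by apply: lideal_aeq; rewrite ae_subr0. Qed.

Lemma eqmod0_lideal {x} : x == Cst 0 [mod L] -> L x.
Proof. by apply: lideal_aeq; rewrite ae_subr0. Qed.

Lemma eqmod_lincomb (s : seq nat) c v w :
  (forall k, k \in s -> v k == w k [mod L]) -> lincomb s c v == lincomb s c w [mod L].
Proof.
elim: s => [|k s IH] vw /=; first exact: aeq_eqmod.
apply: eqmodD; first by apply/eqmodZ/vw; rewrite mem_head.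
by apply: IH => j js; apply: vw; rewrite in_cons js orbT.
Qed.

End LeftIdeal.

Lemma tsum_map (A B : Type) (f : A -> B) (s : seq A) F : tsum (map f s) F = tsum s (F \o f).
Proof. by elim: s => //= a s ->. Qed.

Section LinearCombinations.
Context {q : C}.
Local Notation "x ~ y" := (aeq q x y) (at level 70).

Lemma lincomb_cat s1 s2 c v :
  lincomb (s1 ++ s2) c v ~ Add (lincomb s1 c v) (lincomb s2 c v).
Proof.
elim: s1 => [|k s1 IH] /=; first by rewrite ae_add0.
by rewrite IH ae_addA.
Qed.

Lemma lincomb_eq0 s c v : (forall k, k \in s -> c k = 0) -> lincomb s c v ~ Cst 0.
Proof.
elim: s => [|k s IH] c0 //=.
rewrite c0 ?mem_head // ae_mul0l ae_add0 IH // => j js.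
by apply: c0; rewrite in_cons js orbT.
Qed.

Lemma lincomb_ext s c c' v : c =1 c' -> lincomb s c v = lincomb s c' v.
Proof. by move=> cc'; rewrite /lincomb; elim: s => //= k s ->; rewrite cc'. Qed.

Lemma lincombD s c c' v :
  Add (lincomb s c v) (lincomb s c' v) ~ lincomb s (fun k => c k + c' k) v.
Proof.
elim: s => [|k s IH] /=; first by rewrite ae_add0.
by rewrite ae_addACA IH ae_cstD ae_mulDl.
Qed.

Lemma lincombZ s a c v : Mul (Cst a) (lincomb s c v) ~ lincomb s (fun k => a * c k) v.
Proof.
elim: s => [|k s IH] /=; first by rewrite ae_mul0r.
by rewrite ae_mulDr IH ae_scaleA.
Qed.

Lemma lincomb_lincomb s t lam c v :
  lincomb s lam (fun k => lincomb t (c k) v)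
  ~ lincomb t (fun j => \sum_(k <- s) lam k * c k j) v.
Proof.
elim: s => [|k s IH] /=.
  by rewrite (lincomb_eq0 _ _ _) // => j _; rewrite big_nil.
rewrite IH lincombZ lincombD; under [X in _ ~ X]lincomb_ext do rewrite big_cons.
by [].
Qed.

Lemma tsum_zip (cs : seq C) (bs : seq term) :
  tsum (zip cs bs) (fun p => Mul (Cst p.1) p.2)
  ~ lincomb (iota 0 (size bs)) (nth 0 cs) (nth (Cst 0) bs).
Proof.
elim: bs cs => [|b bs IH] [|c cs] //=.
  by rewrite ae_mul0l ae_add0 (lincomb_eq0 _ _ _) // => k _; rewrite nth_nil.
by rewrite IH /lincomb /= -[1%N]addn0 iotaDl tsum_map.
Qed.

End LinearCombinations.

Lemma rows_linear_dependent (N : nat) (c : nat -> nat -> C) :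
  exists2 lam : nat -> C, exists2 k, (k <= N)%N & lam k != 0 &
    forall j, (j < N)%N -> \sum_(k <- iota 0 N.+1) lam k * c k j = 0.
Proof.
pose M : 'M[C]_(N.+1, N) := \matrix_(k < N.+1, j < N) c k j.
have : kermx M != 0.
  rewrite kermx_eq0 /row_free; apply: contraTneq (rank_leq_col M) => ->.
  by rewrite ltnn.
case/matrix0Pn => i [k ik].
exists (fun k => kermx M i (inord k)); first by exists k; rewrite ?inord_val // -ltnS.
move=> j jN.
have /(congr1 (fun r : 'rV_N => r 0 (Ordinal jN))) := congr1 (row i) (mulmx_ker M).
rewrite row_mul row0 !mxE => sum0; rewrite -[RHS]sum0.
rewrite [iota _ _](_ : _ = index_iota 0 N.+1) ?big_mkord; last by rewrite /index_iota subn0.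
by apply: eq_bigr => k' _; rewrite inord_val !mxE.
Qed.

Lemma fin_dim_quot_relation {q L} {v : nat -> term} :
  is_lideal q L -> fin_dim_quot q L -> (forall k, inY q (v k)) ->
  exists K (lam : nat -> C), lam K != 0 /\ L (lincomb (iota 0 K.+1) lam v).
Proof.
move=> hL [bs [_ span]] Yv; pose M := size bs.
pose cs k := proj1_sig (constructive_indefinite_description _ (span _ (Yv k))).
have v_cs k : eqmod q L (v k) (lincomb (iota 0 M) (nth 0 (cs k)) (nth (Cst 0) bs)).
  rewrite /cs /eqmod; case: constructive_indefinite_description => /= c.
  by apply: (lideal_aeq hL); rewrite tsum_zip.
have [lam [k0 k0M lam0] lam_rel] := rows_linear_dependent M (fun k j => nth 0 (cs k) j).
have Lrel : L (lincomb (iota 0 M.+1) lam v).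
  apply/(eqmod0_lideal hL)/(eqmod_trans hL _ (eqmod_lincomb hL _ _ _ _ (fun k _ => v_cs k))).
  apply: (aeq_eqmod hL); rewrite lincomb_lincomb lincomb_eq0 // => j.
  by rewrite mem_iota => /andP[_ /lam_rel].
have exP : exists k, (k <= M)%N && (lam k != 0) by exists k0; rewrite k0M lam0.
have ubP k : (k <= M)%N && (lam k != 0) -> (k <= M)%N by case/andP.
have [K /andP[KM lamK] Kmax] := ex_maxnP exP ubP.
exists K, lam; split => //; apply: (lideal_aeq hL _ Lrel).
rewrite -(subnKC KM) -addSn iotaD lincomb_cat.
rewrite [lincomb (iota _ (M - K)) _ _]lincomb_eq0 ?ae_addr0 // => k.
rewrite mem_iota add0n => /andP[Kk kM]; apply/eqP; apply: contraTT Kk => lamk.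
by rewrite -leqNgt Kmax // lamk andbT -ltnS (leq_trans kM) // addSn subnKC.
Qed.

(** * Lowering operators *)

Definition lmulpow (a : term) (k : nat) (x : term) : term := iter k (Mul a) x.

(* [qint p g k = g (1 + p + ... + p^(k-1))], the eigenvalue by which [e] lowers [f^k]. *)
Definition qint (p g : C) (k : nat) : C := iter k (fun c => p * c + g) 0.
Definition lower_coef (p g : C) (j k : nat) : C := \prod_(i < j) qint p g (k - i).

Lemma qint_closed p g k : qint p g k * (1 - p) = g * (1 - p ^+ k).
Proof.
elim: k => [|k IH] /=; first by rewrite expr0 subrr mul0r mulr0.
by rewrite -/(qint p g k) mulrDl -mulrA IH exprS; ring.
Qed.

Lemma qint_neq0 p g k : g != 0 -> (forall n, (0 < n)%N -> p ^+ n != 1) ->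
  (0 < k)%N -> qint p g k != 0.
Proof.
move=> g0 p_root k0; apply/eqP => qk0.
have := qint_closed p g k; rewrite qk0 mul0r => /esym/eqP.
by rewrite mulf_eq0 (negbTE g0) subr_eq0 eq_sym (negbTE (p_root k k0)).
Qed.

Lemma lower_coef_eq0 p g j k : (k < j)%N -> lower_coef p g j k = 0.
Proof.
by move=> kj; apply/eqP/prodf_eq0; exists (Ordinal kj) => //=; rewrite subnn.
Qed.

Lemma lower_coef_neq0 p g j k : g != 0 -> (forall n, (0 < n)%N -> p ^+ n != 1) ->
  (j <= k)%N -> lower_coef p g j k != 0.
Proof.
move=> g0 p_root jk; apply/prodf_neq0 => i _.
by apply: qint_neq0 => //; rewrite subn_gt0 (leq_trans _ jk).
Qed.

Section Lowering.
Context {q : C} {L : term -> Prop} (hL : is_lideal q L).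
Context {e f h : term} {p g lam : C}.
Hypotheses (Ye : inY q e) (Yf : inY q f) (Le : L e) (Lh : L h).
Hypothesis e_f :
  aeq q (Mul e f) (Add (Mul (Cst p) (Mul f e)) (Mul (Cst g) (Add (Cst 1) (Mul m1 h)))).
Hypothesis h_f : aeq q (Mul h f) (Mul (Cst lam) (Mul f h)).
Local Notation "x ~ y" := (aeq q x y) (at level 70).
Local Notation "x == y [mod L ]" := (eqmod q L x y) (at level 70).
Local Notation fpow k := (lmulpow f k (Cst 1)).

Lemma inY_lmulpow a k x : inY q a -> inY q x -> inY q (lmulpow a k x).
Proof. by move=> Ya Yx; elim: k => //= k IH; apply: Y_mul. Qed.

Lemma lideal_lmulpow a k x : inY q a -> L x -> L (lmulpow a k x).
Proof. by move=> Ya Lx; elim: k => //= k IH; apply: (lidealM hL). Qed.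

Lemma lmulpow_lincomb a k s c v :
  lmulpow a k (lincomb s c v) ~ lincomb s c (fun i => lmulpow a k (v i)).
Proof.
elim: k => [|k IH] //=; rewrite IH /lincomb.
by elim: s {IH} => [|i s IHs] /=; rewrite ?ae_mul0r // ae_mulDr IHs ae_scale_mulr.
Qed.

Lemma lincombZr s c d v :
  lincomb s c (fun i => Mul (Cst (d i)) (v i)) ~ lincomb s (fun i => c i * d i) v.
Proof. by elim: s => [|i s IH] //=; rewrite IH ae_scaleA. Qed.

Lemma h_fpow k : L (Mul h (fpow k)).
Proof.
elim: k => [|k IH] /=; first by apply: (lideal_aeq hL _ Lh); rewrite ae_mul1r.
apply: (lideal_aeq hL _ (lidealZ hL lam (lidealM hL Yf IH))).
by rewrite (ae_mulA q f) -ae_scale_mull -h_f -ae_mulA.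
Qed.

Lemma f_fpow_pred k :
  Mul f (Mul (Cst (qint p g k)) (fpow k.-1)) ~ Mul (Cst (qint p g k)) (fpow k).
Proof. by case: k => [|k] /=; rewrite ?ae_mul0l ?ae_mul0r // ae_scale_mulr. Qed.

Lemma e_f_mul x : Mul e (Mul f x)
  ~ Add (Add (Mul (Cst p) (Mul f (Mul e x))) (Mul (Cst g) x)) (Mul (Cst (- g)) (Mul h x)).
Proof.
have pfe : Mul (Mul (Cst p) (Mul f e)) x ~ Mul (Cst p) (Mul f (Mul e x)).
  by rewrite ae_scale_mull -ae_mulA.
have gh : Mul (Mul (Cst g) (Add (Cst 1) (Mul m1 h))) x
          ~ Add (Mul (Cst g) x) (Mul (Cst (- g)) (Mul h x)).
  by rewrite ae_scale_mull ae_mulDl ae_mul1l ae_scale_mull ae_mulDr ae_scaleA mulrN1.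
by rewrite ae_mulA e_f ae_mulDl pfe gh ae_addA.
Qed.

Lemma e_fpow k : Mul e (fpow k) == Mul (Cst (qint p g k)) (fpow k.-1) [mod L].
Proof.
elim: k => [|k IH].
  by apply: (eqmod_aeq hL _ _ (lideal_eqmod0 hL Le)); rewrite ?ae_mul1r ?ae_mul0l.
change (Mul e (Mul f (fpow k)) == Mul (Cst (qint p g k.+1)) (fpow k) [mod L]).
apply: (eqmod_aeq hL (ae_sym (e_f_mul _))
  (_ : Add (Add (Mul (Cst p) (Mul f (Mul (Cst (qint p g k)) (fpow k.-1))))
                (Mul (Cst g) (fpow k))) (Cst 0) ~ _)).
  by rewrite ae_addr0 f_fpow_pred ae_scaleA -ae_mulDl -ae_cstD.
apply: (eqmodD hL); last exact/(lideal_eqmod0 hL)/(lidealZ hL)/h_fpow.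
apply: (eqmodD hL (eqmodZ hL _ (eqmodMl hL Yf IH))); exact: (aeq_eqmod hL).
Qed.

Lemma epow_fpow j k :
  lmulpow e j (fpow k) == Mul (Cst (lower_coef p g j k)) (fpow (k - j)) [mod L].
Proof.
elim: j => [|j IH].
  by apply: (aeq_eqmod hL); rewrite /lower_coef big_ord0 subn0 ae_mul1l.
apply: (eqmod_trans hL _ (eqmodMl hL Ye IH)).
apply: (eqmod_aeq hL _ _ (eqmodZ hL (lower_coef p g j k) (e_fpow (k - j)))).
  by rewrite ae_scale_mulr.
by rewrite ae_scaleA /lower_coef big_ord_recr subnS.
Qed.

Lemma lowering_not_fin_dim : g != 0 -> (forall n, (0 < n)%N -> p ^+ n != 1) ->
  ~ L (Cst 1) -> ~ fin_dim_quot q L.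
Proof.
move=> g0 p_root L1 fd.
have Yfpow k : inY q (fpow k) by apply: inY_lmulpow => //; exact: Y_cst.
have [K [c [cK Lrel]]] := fin_dim_quot_relation hL fd Yfpow.
pose a := c K * lower_coef p g K K.
have a0 : a != 0 by rewrite mulf_neq0 // lower_coef_neq0.
have eK : lmulpow e K (lincomb (iota 0 K.+1) c (fun k => fpow k)) == Cst a [mod L].
  apply: (eqmod_aeq hL (ae_sym (lmulpow_lincomb _ _ _ _ _)) (ae_refl _ _)).
  apply: (eqmod_trans hL _ (eqmod_lincomb hL _ _ _ _ (fun k _ => epow_fpow K k))).
  apply: (aeq_eqmod hL); rewrite lincombZr -addn1 iotaD lincomb_cat lincomb_eq0 ?ae_add0.
    by rewrite /= subnn ae_mul1r ae_addr0.
  by move=> k; rewrite mem_iota => /andP[_ kK]; rewrite lower_coef_eq0 ?mulr0.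
apply: L1; apply: (lideal_unit hL (Y_cst q a^-1) (_ : Mul _ (Cst a) ~ _)).
  by rewrite -ae_cstM mulVf.
apply/(eqmod0_lideal hL)/(eqmod_trans hL _ (eqmod_sym hL eK))/(lideal_eqmod0 hL).
exact: lideal_lmulpow.
Qed.

End Lowering.

Theorem proposition4p3 (q : C) (hq0 : q != 0)
    (hq : forall n : nat, (0 < n)%N -> q ^+ n != 1)
    (mu mub : nat -> C) (L : term -> Prop) :
  irr_verma_quot q mu mub L -> fin_dim_quot q L ->
  mu 0%N != 0 /\ mub 0%N != 0.
Proof.
move=> [hL Lgen L1 _] fd; split; apply/eqP => v0.
- have Ls11 : L (s0 q i1 i1) by apply: Lgen; exists 0%N; exact: Or31.
  have Ls21 : L (s0 q i2 i1).
    by apply: (lideal_subr0 hL v0); apply: Lgen; exists 0%N; exact: Or32.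
  have Le : L (ee q) := lidealM hL (inY_xi hq0) Ls11.
  have Lh : L (hh q).
    apply/(lidealZ hL)/(lidealD hL (lidealM hL (inY_ff hq0) Le)).
    exact/(lidealZ hL)/(lidealM hL (inY_xi hq0)).
  have g0 : q - q ^+ 3 != 0.
    by rewrite (_ : _ - _ = q * (1 - q ^+ 2)) ?mulf_neq0 // ?subr_eq0 1?eq_sym ?hq //; ring.
  have q2_root n : (0 < n)%N -> (q ^+ 2) ^+ n != 1.
    by move=> n0; rewrite -exprM hq // muln_gt0.
  exact: (lowering_not_fin_dim hL (inY_ee hq0) (inY_ff hq0) Le Lh (ee_ff hq0) (hh_ff hq0)
                               g0 q2_root L1 fd).
- have Lsb21 : L (sb_coef q i2 i1 0).
    by apply: (lideal_subr0 hL v0); apply: Lgen; exists 0%N; exact: Or33.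
  have Yxi : inY q (Mul (Cst (- q)) (xi q)) by apply: Y_mul; [exact: Y_cst | exact: inY_xi].
  exact: L1 (lideal_unit hL Yxi (xi_sb21 hq0) Lsb21).
Qed.
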